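(* Consider the online firefighter game on the infinite square grid $\mathbb{L}_2=\mathbb{Z}\times\mathbb{Z}$ (described in the context). There is an online strategy for Player 1 that wins against every firefighter sequence $(f_i)_{i\geq 1}$ revealed by Player 2 for which there exists $N\geq 1$ with $\sum_{i=1}^N f_i\geq 16\cdot N$.
   Context: The grid $\mathbb{L}_2$ has vertex set $\mathbb{Z}\times\mathbb{Z}$, with $(x,y)$ adjacent to $(x',y')$ iff $|x-x'|+|y-y'|=1$. A fire starts at an ignition vertex $v$ at time $0$ (so $v$ is burning). A firefighter sequence is a sequence $(f_i)_{i\geq 1}$ of non-negative integers. At each turn $i\geq 1$: Player 1 chooses at most $f_i$ vertices that are neither burning nor protected and protects them; then the fire spreads from every burning vertex to all of its unprotected neighbours. Once a vertex is burning or protected it remains so forever; unused firefighters are not carried over. Player 2 wins if at every turn some new vertex starts burning; otherwise Player 1 wins (the fire is contained). In the online version the sequence is chosen by Player 2 and revealed turn by turn: at turn $i$ Player 2 reveals $f_i$ to Player 1 just before Player 1 places firefighters, so an online strategy of Player 1 chooses its moves at turn $i$ based only on $f_1,\dots,f_i$ and the history of the game so far (in particular without knowing $N$ in advance). *)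

From Stdlib Require Import ZArith List.
Import ListNotations.
Open Scope Z_scope.

Definition vertex : Type := (Z * Z)%type.

Definition adj (u w : vertex) : Prop :=
  Z.abs (fst u - fst w) + Z.abs (snd u - snd w) = 1.

(* A firefighter sequence (f_i)_{i>=1} is f : nat -> nat; f 0 is unused. *)
Definition prefix (f : nat -> nat) (n : nat) : list nat := map f (seq 1 n).

(* An online strategy: given the ignition vertex and the revealed values
   f_1,...,f_i, it returns the list of vertices to protect at turn i.
   Since the game is deterministic given Player 1's own moves, the whole
   history is a function of these data, so this captures all online
   strategies. *)
Definition strategy : Type := vertex -> list nat -> list vertex.

Fixpoint state (s : strategy) (v : vertex) (f : nat -> nat) (i : nat)
  : (vertex -> Prop) * (vertex -> Prop) :=
  match i with
  | O => (fun x => x = v, fun _ => False)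
  | S j =>
      let (B, P) := state s v f j in
      let L := s v (prefix f (S j)) in
      let P' := fun x => P x \/ In x L in
      (fun x => B x \/ (~ P' x /\ exists u, B u /\ adj u x), P')
  end.

Definition burning s v f i := fst (state s v f i).
Definition protected s v f i := snd (state s v f i).

Definition legal_move (s : strategy) (v : vertex) (f : nat -> nat) (i : nat) : Prop :=
  let L := s v (prefix f i) in
  (length L <= f i)%nat /\
  forall x, In x L -> ~ burning s v f (i - 1) x /\ ~ protected s v f (i - 1) x.

Definition p1_wins (s : strategy) (v : vertex) (f : nat -> nat) : Prop :=
  exists i : nat, (1 <= i)%nat /\
    forall x, burning s v f i x -> burning s v f (i - 1) x.

Definition psum (f : nat -> nat) (N : nat) : nat := list_sum (prefix f N).

(* Player 1 protects vertices in one fixed order, the "spiral": the l1-spheres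
   around the ignition vertex of radii 1, 2, 4, 8, ..., each listed once.  At
   turn i it protects the next f_i vertices of the spiral, but never starts
   before the sphere of radius 2^(log2_up i) >= i, which the fire (spreading at
   unit speed) cannot have reached yet; so every move is legal.  The spheres of
   radii up to R = 2^(log2_up N) < 2N have 4(2R - 1) < 16N vertices, so if
   f_1 + ... + f_N >= 16N the whole sphere of radius R is protected by turn N.
   The fire is then trapped in a finite ball, hence stops spreading at some
   turn. *)

From Stdlib Require Import ZArith List Lia ZifyNat Classical.
Import ListNotations.
Open Scope Z_scope.

Definition dist (x y : vertex) : Z := Z.abs (fst x - fst y) + Z.abs (snd x - snd y).
Definition norm1 (d : vertex) : Z := Z.abs (fst d) + Z.abs (snd d).
Definition translate (v d : vertex) : vertex := (fst v + fst d, snd v + snd d).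

Lemma dist_translate v d : dist (translate v d) v = norm1 d.
Proof. unfold dist, norm1, translate; simpl; f_equal; f_equal; lia. Qed.

Lemma translate_diff v x : translate v (fst x - fst v, snd x - snd v) = x.
Proof. destruct x; unfold translate; simpl; f_equal; lia. Qed.

Lemma translate_inj v d d' : translate v d = translate v d' -> d = d'.
Proof.
  destruct d, d'; unfold translate; simpl; intros E; injection E; intros; f_equal; lia.
Qed.

Lemma dist_adj_le u x v : adj u x -> dist x v <= dist u v + 1.
Proof. unfold adj, dist; lia. Qed.

Definition zrange (lo : Z) (n : nat) : list Z := map (fun k => lo + Z.of_nat k) (seq 0 n).

Definition ball (v : vertex) (R : Z) : list vertex :=
  let side := Z.to_nat (2 * R + 1) in
  list_prod (zrange (fst v - R) side) (zrange (snd v - R) side).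

Lemma in_zrange lo n a : lo <= a < lo + Z.of_nat n -> In a (zrange lo n).
Proof.
  intros H; apply in_map_iff; exists (Z.to_nat (a - lo)); split; [lia|].
  apply in_seq; lia.
Qed.

Lemma in_ball v R x : dist x v <= R -> In x (ball v R).
Proof.
  destruct x as [a b]; unfold dist; simpl; intros H.
  apply in_prod; apply in_zrange; lia.
Qed.

Section Game.

Variables (s : strategy) (v : vertex) (f : nat -> nat).

Lemma burning_0 x : burning s v f 0 x <-> x = v.
Proof. reflexivity. Qed.

Lemma not_protected_0 x : ~ protected s v f 0 x.
Proof. tauto. Qed.

Lemma protected_S j x :
  protected s v f (S j) x <-> protected s v f j x \/ In x (s v (prefix f (S j))).
Proof. unfold protected; simpl; destruct (state s v f j); reflexivity. Qed.

Lemma burning_S j x :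
  burning s v f (S j) x <->
  burning s v f j x \/
  (~ protected s v f (S j) x /\ exists u, burning s v f j u /\ adj u x).
Proof.
  unfold burning, protected; simpl; destruct (state s v f j); reflexivity.
Qed.

Lemma burning_mono i j x : (i <= j)%nat -> burning s v f i x -> burning s v f j x.
Proof. induction 1; auto; intros; apply burning_S; auto. Qed.

Lemma protected_mono i j x :
  (i <= j)%nat -> protected s v f i x -> protected s v f j x.
Proof. induction 1; auto; intros; apply protected_S; auto. Qed.

Lemma burning_dist t x : burning s v f t x -> dist x v <= Z.of_nat t.
Proof.
  revert x; induction t as [|t IH]; intros x Hx.
  - apply burning_0 in Hx; rewrite Hx; unfold dist; lia.
  - apply burning_S in Hx as [Hx | [_ (u & Hu & Hux)]].
    + specialize (IH x Hx); lia.
    + specialize (IH u Hu); pose proof (dist_adj_le u x v Hux); lia.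
Qed.

(* Spreading at unit speed, the fire reaches the sphere of radius [R] no
   earlier than turn [R >= N], when the whole sphere is already protected. *)
Lemma fire_confined (N : nat) (R : Z) :
  (1 <= N)%nat -> Z.of_nat N <= R ->
  (forall x, dist x v = R -> protected s v f N x) ->
  forall t x, burning s v f t x -> dist x v < R.
Proof.
  intros HN HNR Hsphere t; induction t as [|t IH]; intros x Hx.
  - apply burning_0 in Hx; rewrite Hx; unfold dist; lia.
  - pose proof (burning_dist _ _ Hx) as Hxt.
    apply burning_S in Hx as [Hx | [Hxp (u & Hu & Hux)]]; [auto|].
    pose proof (IH u Hu); pose proof (dist_adj_le u x v Hux).
    destruct (Z.eq_dec (dist x v) R) as [HxR|]; [|lia].
    exfalso; apply Hxp, protected_mono with N; [lia|auto].
Qed.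

Lemma distinct_burning_of_spreading :
  (forall i, (1 <= i)%nat -> exists x, burning s v f i x /\ ~ burning s v f (i - 1) x) ->
  forall M, exists l, length l = M /\ NoDup l /\ forall x, In x l -> burning s v f M x.
Proof.
  intros Hspread M; induction M as [|M (l & Hlen & Hnd & Hl)].
  - exists []; repeat split; [constructor | intros x []].
  - destruct (Hspread (S M)) as (x & Hx & Hnx); [lia|].
    rewrite Nat.sub_succ, Nat.sub_0_r in Hnx.
    exists (x :: l); repeat split.
    + simpl; lia.
    + constructor; auto.
    + intros y [<- | Hy]; auto; apply burning_mono with M; auto.
Qed.

(* A fire that spreads at every turn has burnt [M] distinct vertices after
   [M] turns, so it cannot stay inside a finite ball. *)
Lemma p1_wins_of_bounded_fire (R : Z) :
  (forall t x, burning s v f t x -> dist x v < R) -> p1_wins s v f.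
Proof.
  intros Hbounded; apply NNPP; intros Hlose.
  assert (Hspread : forall i, (1 <= i)%nat ->
            exists x, burning s v f i x /\ ~ burning s v f (i - 1) x).
  { intros i Hi; apply NNPP; intros Hstop; apply Hlose; exists i; split; [auto|].
    intros x Hx; apply NNPP; intros Hnx; apply Hstop; eauto. }
  destruct (distinct_burning_of_spreading Hspread (S (length (ball v R))))
    as (l & Hlen & Hnd & Hl).
  assert (Hincl : incl l (ball v R)).
  { intros x Hx; apply in_ball; specialize (Hbounded _ _ (Hl x Hx)); lia. }
  pose proof (NoDup_incl_length Hnd Hincl); lia.
Qed.

End Game.

Definition rot (d : vertex) : vertex := (snd d, - fst d).

(* For [0 <= a < r], the points [(a, r - a)] form the quarter of the sphere of
   radius [r] with [x >= 0, y > 0]; [c] quarter turns give the other quarters. *)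
Definition sphere_point (r a : Z) (c : nat) : vertex := Nat.iter c rot (a, r - a).

Lemma norm1_rot d : norm1 (rot d) = norm1 d.
Proof. unfold norm1, rot; simpl; lia. Qed.

Lemma norm1_sphere_point r a c : 0 <= a <= r -> norm1 (sphere_point r a c) = r.
Proof.
  intros Ha; unfold sphere_point; induction c as [|c IH]; simpl.
  - unfold norm1; simpl; lia.
  - rewrite norm1_rot; exact IH.
Qed.

Lemma sphere_point_inj r a c r' a' c' :
  0 <= a < r -> 0 <= a' < r' -> (c < 4)%nat -> (c' < 4)%nat ->
  sphere_point r a c = sphere_point r' a' c' -> r = r' /\ a = a' /\ c = c'.
Proof.
  intros Ha Ha' Hc Hc'.
  destruct c as [|[|[|[|c]]]]; try lia; destruct c' as [|[|[|[|c']]]]; try lia;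
    unfold sphere_point; simpl; intros E; injection E; lia.
Qed.

Lemma sphere_point_surj d :
  0 < norm1 d ->
  exists a c, 0 <= a < norm1 d /\ (c < 4)%nat /\ sphere_point (norm1 d) a c = d.
Proof.
  destruct d as [x y]; unfold norm1, sphere_point, rot; simpl; intros Hd.
  destruct (Z.le_gt_cases 0 x), (Z.le_gt_cases 0 y).
  - destruct (Z.eq_dec y 0).
    + exists 0, 1%nat; repeat split; try lia; simpl; f_equal; lia.
    + exists x, 0%nat; repeat split; try lia; simpl; f_equal; lia.
  - destruct (Z.eq_dec x 0).
    + exists 0, 2%nat; repeat split; try lia; simpl; f_equal; lia.
    + exists (- y), 1%nat; repeat split; try lia; simpl; f_equal; lia.
  - exists y, 3%nat; repeat split; try lia; simpl; f_equal; lia.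
  - exists (- x), 2%nat; repeat split; try lia; simpl; f_equal; lia.
Qed.

Definition shell_radius (m : nat) : Z := 2 ^ Z.log2 (Z.of_nat m + 1).

Definition shell_start (k : Z) : nat := 4 * Z.to_nat (2 ^ k - 1).

(* Index [p] is the quadrant [p mod 4] of the shell [m = p / 4]; the shells
   [2^k - 1 <= m < 2^(k+1) - 1] make up the sphere of radius [2^k], which thus
   starts at index [shell_start k]. *)
Definition spiral (p : nat) : vertex :=
  let m := (p / 4)%nat in
  let r := shell_radius m in
  sphere_point r (Z.of_nat m + 1 - r) (p mod 4).

Lemma shell_radius_spec m : shell_radius m <= Z.of_nat m + 1 < 2 * shell_radius m.
Proof.
  unfold shell_radius; pose proof (Z.log2_spec (Z.of_nat m + 1)) as H.
  rewrite Z.pow_succ_r in H by apply Z.log2_nonneg; lia.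
Qed.

Lemma shell_radius_pow2 k m :
  0 <= k -> 2 ^ k <= Z.of_nat m + 1 < 2 ^ (k + 1) -> shell_radius m = 2 ^ k.
Proof.
  intros Hk Hm; unfold shell_radius; f_equal; apply Z.log2_unique; [auto|].
  rewrite <- Z.add_1_r; exact Hm.
Qed.

Lemma shell_radius_ge k m : 0 <= k -> 2 ^ k <= Z.of_nat m + 1 -> 2 ^ k <= shell_radius m.
Proof.
  intros Hk Hm; unfold shell_radius; apply Z.pow_le_mono_r; [lia|].
  apply Z.log2_le_pow2; lia.
Qed.

Lemma norm1_spiral p : norm1 (spiral p) = shell_radius (p / 4).
Proof.
  unfold spiral; pose proof (shell_radius_spec (p / 4)).
  apply norm1_sphere_point; lia.
Qed.

Lemma spiral_inj p p' : spiral p = spiral p' -> p = p'.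
Proof.
  unfold spiral; intros E.
  pose proof (shell_radius_spec (p / 4)); pose proof (shell_radius_spec (p' / 4)).
  apply sphere_point_inj in E as (Hr & Ha & Hc); lia.
Qed.

Lemma spiral_shell k a c :
  0 <= k -> 0 <= a < 2 ^ k -> (c < 4)%nat ->
  spiral (4 * Z.to_nat (2 ^ k - 1 + a) + c) = sphere_point (2 ^ k) a c.
Proof.
  intros Hk Ha Hc; unfold spiral.
  replace ((4 * Z.to_nat (2 ^ k - 1 + a) + c) / 4)%nat
    with (Z.to_nat (2 ^ k - 1 + a)) by lia.
  replace ((4 * Z.to_nat (2 ^ k - 1 + a) + c) mod 4)%nat with c by lia.
  rewrite shell_radius_pow2 with (k := k); [f_equal; lia | auto |].
  rewrite Z.pow_add_r, Z.pow_1_r by lia; lia.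
Qed.

Lemma spiral_covers_sphere k d :
  0 <= k -> norm1 d = 2 ^ k ->
  exists p,
    (shell_start k <= p < shell_start k + 4 * Z.to_nat (2 ^ k))%nat /\ spiral p = d.
Proof.
  intros Hk Hd; unfold shell_start.
  pose proof (Z.pow_pos_nonneg 2 k ltac:(lia) Hk).
  destruct (sphere_point_surj d) as (a & c & Ha & Hc & Ed); [lia|].
  rewrite Hd in Ha, Ed.
  exists (4 * Z.to_nat (2 ^ k - 1 + a) + c)%nat; split; [lia|].
  rewrite spiral_shell; auto.
Qed.

Lemma norm1_spiral_ge k p :
  0 <= k -> (shell_start k <= p)%nat -> 2 ^ k <= norm1 (spiral p).
Proof.
  unfold shell_start; intros Hk Hp; rewrite norm1_spiral.
  apply shell_radius_ge; [auto|].
  pose proof (Z.pow_pos_nonneg 2 k ltac:(lia) Hk); lia.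
Qed.

Lemma pow2_log2_up_bounds n : 1 <= n -> n <= 2 ^ Z.log2_up n < 2 * n.
Proof.
  intros Hn; split; [apply Z.log2_up_le_pow2; lia|].
  destruct (Z.eq_dec n 1) as [-> | Hn1]; [reflexivity|].
  pose proof (Z.log2_up_spec n ltac:(lia)) as [Hlo _].
  rewrite <- (Z.succ_pred (Z.log2_up n)), Z.pow_succ_r; [lia|].
  pose proof (Z.log2_up_pos n); lia.
Qed.

Definition first_safe_index (i : nat) : nat := shell_start (Z.log2_up (Z.of_nat i)).

Lemma first_safe_index_mono i j :
  (i <= j)%nat -> (first_safe_index i <= first_safe_index j)%nat.
Proof.
  intros Hij; unfold first_safe_index, shell_start.
  pose proof (Z.pow_le_mono_r 2 _ _ ltac:(lia)
                (Z.log2_up_le_mono (Z.of_nat i) (Z.of_nat j) ltac:(lia))).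
  lia.
Qed.

Lemma norm1_spiral_safe i p :
  (first_safe_index i <= p)%nat -> Z.of_nat i <= norm1 (spiral p).
Proof.
  intros Hp; apply norm1_spiral_ge in Hp; [|apply Z.log2_up_nonneg].
  destruct i as [|i]; [pose proof (norm1_spiral p); unfold norm1 in *; lia|].
  pose proof (pow2_log2_up_bounds (Z.of_nat (S i))); lia.
Qed.

Fixpoint moves_end (g : nat -> nat) (n : nat) : nat :=
  match n with
  | O => O
  | S j => (Nat.max (moves_end g j) (first_safe_index n) + g n)%nat
  end.

Definition move_start (g : nat -> nat) (i : nat) : nat :=
  Nat.max (moves_end g (Nat.pred i)) (first_safe_index i).

Lemma moves_end_S g j : moves_end g (S j) = (move_start g (S j) + g (S j))%nat.
Proof. reflexivity. Qed.

(* On a history [l = prefix f i], [nth (j - 1) l 0] is [f j] for [1 <= j <= i]. *)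
Definition spiral_strategy : strategy := fun v l =>
  let g j := nth (j - 1) l 0%nat in
  map (fun p => translate v (spiral p)) (seq (move_start g (length l)) (g (length l))).

Lemma moves_end_ext g h n :
  (forall j, (1 <= j <= n)%nat -> g j = h j) -> moves_end g n = moves_end h n.
Proof.
  induction n as [|n IH]; intros Hgh; simpl; [reflexivity|].
  rewrite IH, Hgh; [reflexivity | lia | intros j Hj; apply Hgh; lia].
Qed.

Lemma prefix_length f i : length (prefix f i) = i.
Proof. unfold prefix; rewrite length_map, length_seq; reflexivity. Qed.

Lemma prefix_nth f i j : (1 <= j <= i)%nat -> nth (j - 1) (prefix f i) 0%nat = f j.
Proof.
  intros Hj; unfold prefix.
  rewrite (nth_indep _ 0%nat (f 0%nat)) by (rewrite length_map, length_seq; lia).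
  rewrite map_nth, seq_nth by lia; f_equal; lia.
Qed.

Lemma spiral_strategy_prefix v f i : (1 <= i)%nat ->
  spiral_strategy v (prefix f i) =
  map (fun p => translate v (spiral p)) (seq (move_start f i) (f i)).
Proof.
  intros Hi; unfold spiral_strategy; rewrite prefix_length, prefix_nth by lia.
  unfold move_start; rewrite moves_end_ext with (h := f); [reflexivity|].
  intros j Hj; apply prefix_nth; lia.
Qed.

Lemma psum_le_moves_end f N : (psum f N <= moves_end f N)%nat.
Proof.
  induction N as [|N IH]; [reflexivity|].
  unfold psum, prefix in *; rewrite seq_S, map_app, list_sum_app; simpl.
  replace (1 + N)%nat with (S N) by lia; lia.
Qed.

Section SpiralStrategy.

Variables (v : vertex) (f : nat -> nat).

Lemma protected_spiral_inv t x :
  protected spiral_strategy v f t x ->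
  exists p, (p < moves_end f t)%nat /\ x = translate v (spiral p).
Proof.
  induction t as [|t IH]; intros Hx; [destruct (not_protected_0 _ _ _ _ Hx)|].
  apply protected_S in Hx as [Hx | Hx].
  - destruct (IH Hx) as (p & Hp & ->); exists p; split; [simpl; lia | reflexivity].
  - rewrite spiral_strategy_prefix in Hx by lia.
    apply in_map_iff in Hx as (p & <- & Hp); apply in_seq in Hp.
    exists p; split; [rewrite moves_end_S; lia | reflexivity].
Qed.

Lemma protected_spiral i p :
  (first_safe_index i <= p < moves_end f i)%nat ->
  protected spiral_strategy v f i (translate v (spiral p)).
Proof.
  induction i as [|i IH]; intros Hp; [simpl in Hp; lia|].
  destruct (Nat.le_gt_cases (move_start f (S i)) p) as [Hstart | Hstart].
  - apply protected_S; right; rewrite spiral_strategy_prefix by lia.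
    apply in_map_iff; exists p; split; [reflexivity|].
    apply in_seq; rewrite moves_end_S in Hp; lia.
  - apply protected_mono with i; [lia|]; apply IH.
    pose proof (first_safe_index_mono i (S i) ltac:(lia)).
    unfold move_start in Hstart; simpl in Hstart; lia.
Qed.

Lemma spiral_strategy_legal i : (1 <= i)%nat -> legal_move spiral_strategy v f i.
Proof.
  intros Hi; unfold legal_move; cbv zeta; rewrite spiral_strategy_prefix by lia.
  split; [rewrite length_map, length_seq; lia|].
  intros x Hx; apply in_map_iff in Hx as (p & <- & Hp); apply in_seq in Hp.
  unfold move_start in Hp; split.
  - intros Hburnt; apply burning_dist in Hburnt; rewrite dist_translate in Hburnt.
    pose proof (norm1_spiral_safe i p ltac:(lia)); lia.
  - intros Hprot; apply protected_spiral_inv in Hprot as (p' & Hp' & E).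
    apply translate_inj, spiral_inj in E.
    replace (i - 1)%nat with (Nat.pred i) in Hp' by lia; lia.
Qed.

(* The spheres of radii [1, 2, 4, ..., R] with [R = 2 ^ log2_up N < 2 N] have
   [4 (2 R - 1) < 16 N] vertices in total. *)
Lemma spiral_strategy_protects_sphere N :
  (1 <= N)%nat -> (16 * N <= psum f N)%nat ->
  forall x, dist x v = 2 ^ Z.log2_up (Z.of_nat N) -> protected spiral_strategy v f N x.
Proof.
  intros HN Hsum x Hx.
  pose proof (pow2_log2_up_bounds (Z.of_nat N) ltac:(lia)).
  set (k := Z.log2_up (Z.of_nat N)) in *.
  rewrite <- (translate_diff v x).
  destruct (spiral_covers_sphere k (fst x - fst v, snd x - snd v))
    as (p & Hp & <-); [apply Z.log2_up_nonneg | exact Hx |].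
  apply protected_spiral; split; [exact (proj1 Hp)|].
  pose proof (psum_le_moves_end f N); unfold shell_start in Hp; lia.
Qed.

End SpiralStrategy.

Theorem theorem3 :
  exists s : strategy,
    forall (v : vertex) (f : nat -> nat),
      (forall i : nat, (1 <= i)%nat -> legal_move s v f i) /\
      ((exists N : nat, (1 <= N)%nat /\ (16 * N <= psum f N)%nat) -> p1_wins s v f).
Proof.
  exists spiral_strategy; intros v f; split; [apply spiral_strategy_legal|].
  intros (N & HN & Hsum).
  pose proof (pow2_log2_up_bounds (Z.of_nat N) ltac:(lia)).
  apply p1_wins_of_bounded_fire with (R := 2 ^ Z.log2_up (Z.of_nat N)).
  apply fire_confined with N; [exact HN | lia |].
  exact (spiral_strategy_protects_sphere v f N HN Hsum).
Qed.
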